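(* Let $\Bbbk$ be a field, $n\ge2$, $q\in\Bbbk$ a primitive $n$-th root of unity, $T_n(q)$ the Taft algebra and $A$ a unital associative $\Bbbk$-algebra. Let $\cdot:T_n(q)\otimes A\to A$ be a linear map with $g\cdot1_A\in\{0,1_A\}$, and suppose there exists $k\in\{2,\dots,n-1\}$ such that $g^k\cdot a=a$ for all $a\in A$. Then $\cdot$ is a partial action of $T_n(q)$ on $A$ if and only if either $\cdot$ is a global action, or the restriction of $\cdot$ to $\Bbbk C_n\otimes A$ is a partial action of $\Bbbk C_n$ on $A$ with $g\cdot1_A=0$ and $g^ix^j\cdot a=\delta_{j,0}(g^i\cdot a)$ for all $0\le i,j\le n-1$ and $a\in A$.
   Context: The Taft algebra $T_n(q)$ is the Hopf algebra generated by $g,x$ with relations $g^n=1$, $x^n=0$, $xg=qgx$, basis $\{g^ix^j\}$, $g$ group-like, $\Delta(x)=x\otimes1+g\otimes x$, $\varepsilon(x)=0$; $\Bbbk C_n=\mathrm{span}\{1,g,\dots,g^{n-1}\}$. $\delta$ is the Kronecker delta. A partial action of a bialgebra $H$ on $A$ is a linear map $\cdot:H\otimes A\to A$ with $1_H\cdot a=a$, $h\cdot(ab)=(h_1\cdot a)(h_2\cdot b)$, $h\cdot(k\cdot a)=(h_1\cdot1_A)(h_2k\cdot a)$; it is global if moreover $h\cdot1_A=\varepsilon(h)1_A$ for all $h$. *)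

From HB Require Import structures.
From mathcomp Require Import all_boot all_order all_algebra.
Set Implicit Arguments. Unset Strict Implicit. Unset Printing Implicit Defensive.
Import GRing.Theory.
Local Open Scope ring_scope.

(* The Taft algebra T_n(q), presented through its PBW basis g^i x^j
   (0 <= i, j < n).  An element of
   T_n(q) (x) T_n(q) is a coefficient function on pairs of basis indices. *)

Section Taft.
Variables (K : fieldType) (n : nat) (q : K).

Definition tidx := ('I_n * 'I_n)%type.
Definition taft := tidx -> K.
Definition taft2 := tidx -> tidx -> K.

(* basis element g^i x^j for arbitrary natural i, j, using g^n = 1
   (so i is read mod n) and x^n = 0 (so it is 0 when j >= n) *)
Definition tb (i j : nat) : taft :=
  fun p => (((p.1 : nat) == (i %% n)%N) && ((p.2 : nat) == j))%:R.

Definition tbas (p : tidx) : taft := tb p.1 p.2.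

(* multiplication, bilinear extension of
   (g^i x^j)(g^k x^l) = q^(j k) g^(i+k) x^(j+l)   (from x g = q g x) *)
Definition tmul (h h' : taft) : taft :=
  fun r => \sum_(p : tidx) \sum_(p' : tidx)
     h p * h' p' * q ^+ (p.2 * p'.1) * tb (p.1 + p'.1) (p.2 + p'.2) r.

Definition tone : taft := tb 0 0.

(* counit: eps(g) = 1, eps(x) = 0, so eps(g^i x^j) = delta_{j,0} *)
Definition teps (h : taft) : K := \sum_(p : tidx) h p * ((p.2 : nat) == 0%N)%:R.

Definition tt_pure (h h' : taft) : taft2 := fun r s => h r * h' s.
Definition tt_add (u v : taft2) : taft2 := fun r s => u r s + v r s.
Definition tt_mul (u v : taft2) : taft2 :=
  fun r s => \sum_(p1 : tidx) \sum_(p2 : tidx) \sum_(p3 : tidx) \sum_(p4 : tidx)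
     u p1 p2 * v p3 p4 * tmul (tbas p1) (tbas p3) r * tmul (tbas p2) (tbas p4) s.

(* comultiplication: the algebra map with Delta(g) = g (x) g and
   Delta(x) = x (x) 1 + g (x) x; so Delta(g^i x^j) = Delta(g)^i Delta(x)^j *)
Definition Delta_g : taft2 := tt_pure (tb 1 0) (tb 1 0).
Definition Delta_x : taft2 := tt_add (tt_pure (tb 0 1) (tb 0 0)) (tt_pure (tb 1 0) (tb 0 1)).
Definition Delta_b (p : tidx) : taft2 :=
  iter p.1 (tt_mul Delta_g) (iter p.2 (tt_mul Delta_x) (tt_pure tone tone)).
Definition Delta (h : taft) : taft2 :=
  fun r s => \sum_(p : tidx) h p * Delta_b p r s.

Definition in_kCn (h : taft) : Prop := forall p : tidx, (p.2 : nat) != 0%N -> h p = 0.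

Variable (A : algType K).

(* A linear map T_n(q) (x) A -> A is determined by the linear maps
   act p = (g^i x^j) . _ , p = (i, j); hact h a is its value on h (x) a. *)
Definition hact (act : tidx -> A -> A) (h : taft) (a : A) : A :=
  \sum_(p : tidx) h p *: act p a.

(* partial action axioms, with h, k ranging over the elements satisfying P
   (P = all of T_n(q), or the sub-bialgebra k C_n) *)
Definition is_partial_action_on (P : taft -> Prop) (act : tidx -> A -> A) : Prop :=
  [/\ forall a : A, hact act tone a = a,
      forall h, P h -> forall a b : A,
        hact act h (a * b) =
        \sum_(r : tidx) \sum_(s : tidx) Delta h r s *: (act r a * act s b)
    & forall h k, P h -> P k -> forall a : A,
        hact act h (hact act k a) =
        \sum_(r : tidx) \sum_(s : tidx)
           Delta h r s *: (act r 1 * hact act (tmul (tbas s) k) a)].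

Definition is_partial_action (act : tidx -> A -> A) : Prop :=
  is_partial_action_on (fun _ => True) act.

Definition is_global_action (act : tidx -> A -> A) : Prop :=
  is_partial_action act /\ forall h, hact act h 1 = teps h *: 1.

Definition is_partial_action_kCn (act : tidx -> A -> A) : Prop :=
  is_partial_action_on in_kCn act.

End Taft.
Arguments tb {K} n i j p.

From HB Require Import structures.
From mathcomp Require Import all_boot all_order all_algebra.
From mathcomp Require Import ring zify.
From Stdlib Require Import FunctionalExtensionality.
Set Implicit Arguments. Unset Strict Implicit. Unset Printing Implicit Defensive.
Import GRing.Theory.
Local Open Scope ring_scope.

(* Write g^i x^j . a for the action of a basis element.  For a partial action
   the third axiom, for h = g^i and for h = g^i x, reads
     g^i . (g^l x^m . a) = (g^i . 1) (g^(i+l) x^m . a),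
     g^i x . (g^l x^m . a) = (g^i x . 1) (g^(i+l) x^m . a)
                             + (g^(i+1) . 1) q^l (g^(i+l) x^(m+1) . a).
   If g . 1 = 1, the first identity gives g^i . 1 = 1 and the second one
   x^j . 1 = 0 for j > 0, so the action is global.  If g^k acts trivially
   for some 0 < k < n, comparing the second identity for i = n - 1 at l = 0
   and at l = k gives (1 - q^k) (g^(n-1) x . a) = 0, so g^(n-1) x acts by
   zero, and then the same identity forces every g^l x^(m+1) to act by zero.
   Conversely, if all the g^i x^j with j > 0 act by zero, only the x-degree
   zero part of the partial action axioms is left, because the
   comultiplication preserves the x-degree; that part is the partial action
   axioms for k C_n. *)

Section TaftBasis.
Variables (K : fieldType) (n' : nat) (q : K).
Local Notation n := n'.+1.
Local Notation tidx := (tidx n).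
Local Notation taft := (taft K n).
Local Notation taft2 := (taft2 K n).

Definition bidx (i j : nat) : tidx := (inord i, inord j).

Lemma bidx1 (i j : nat) : (i < n)%N -> ((bidx i j).1 : nat) = i.
Proof. by move=> lt_in; rewrite /= inordK. Qed.

Lemma bidx2 (i j : nat) : (j < n)%N -> ((bidx i j).2 : nat) = j.
Proof. by move=> lt_jn; rewrite /= inordK. Qed.

Lemma bidx_val (p : tidx) : bidx p.1 p.2 = p.
Proof. by case: p => i j; rewrite /bidx !inord_val. Qed.

Lemma tbE (i j : nat) (r : tidx) : (j < n)%N ->
  tb n i j r = (r == bidx (i %% n) j)%:R :> K.
Proof.
move=> lt_jn; case: r => r1 r2.
by rewrite /tb /bidx xpair_eqE -!val_eqE /= !inordK // ltn_pmod.
Qed.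

Lemma tb_overflow (i j : nat) (r : tidx) : (n <= j)%N -> tb n i j r = 0 :> K.
Proof.
move=> le_nj; rewrite /tb (_ : (r.2 : nat) == j = false) ?andbF //.
by apply/negbTE; rewrite neq_ltn (leq_trans (ltn_ord _) le_nj).
Qed.

Lemma tbasE (p r : tidx) : tbas K p r = (r == p)%:R.
Proof.
case: p r => p1 p2 [r1 r2].
by rewrite /tbas /tb xpair_eqE /= (modn_small (ltn_ord _)) !val_eqE.
Qed.

Lemma tb_tbas (i j : nat) : (j < n)%N -> tb n i j = tbas K (bidx (i %% n) j).
Proof. by move=> lt_jn; apply: functional_extensionality => r; rewrite tbE // tbasE. Qed.

Lemma sum_tbZ (V : lmodType K) (i j : nat) (F : tidx -> V) :
  \sum_r tb n i j r *: F r = if (j < n)%N then F (bidx (i %% n) j) else 0.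
Proof.
case: ltnP => [lt_jn | le_nj]; last by rewrite big1 // => r _; rewrite tb_overflow // scale0r.
rewrite (bigD1 (bidx (i %% n) j)) //= tbE // eqxx scale1r big1 ?addr0 //.
by move=> r /negbTE r_neq; rewrite tbE // r_neq scale0r.
Qed.

Lemma sum_tbM (i j : nat) (F : tidx -> K) :
  \sum_r tb n i j r * F r = if (j < n)%N then F (bidx (i %% n) j) else 0.
Proof. exact: (@sum_tbZ K^o). Qed.

Lemma sum_tbasM (p : tidx) (F : tidx -> K) : \sum_r tbas K p r * F r = F p.
Proof. by rewrite [LHS](sum_tbM p.1 p.2) ltn_ord modn_small // bidx_val. Qed.

Lemma tmul_tbas (p1 p3 r : tidx) :
  tmul q (tbas K p1) (tbas K p3) r =
  q ^+ (p1.2 * p3.1) * tb n (p1.1 + p3.1) (p1.2 + p3.2) r.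
Proof.
rewrite /tmul; under eq_bigr do under eq_bigr do rewrite -!mulrA.
by under eq_bigr do rewrite -mulr_sumr sum_tbasM; rewrite sum_tbasM.
Qed.

Lemma tmulE (u v : taft) (r : tidx) :
  tmul q u v r = \sum_p1 \sum_p3 u p1 * v p3 * tmul q (tbas K p1) (tbas K p3) r.
Proof. by apply: eq_bigr => p1 _; apply: eq_bigr => p3 _; rewrite tmul_tbas !mulrA. Qed.

Lemma tmul_tb (i j k l : nat) (r : tidx) :
  tmul q (tb n i j) (tb n k l) r = q ^+ (j * (k %% n)) * tb n (i + k) (j + l) r.
Proof.
have [le_nj | lt_jn] := leqP n j.
  rewrite tb_overflow ?mulr0 ?(leq_trans le_nj (leq_addr _ _)) //.
  by rewrite /tmul big1 // => p _; rewrite big1 // => p' _; rewrite tb_overflow // !mul0r.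
have [le_nl | lt_ln] := leqP n l.
  rewrite tb_overflow ?mulr0 ?(leq_trans le_nl (leq_addl _ _)) //.
  rewrite /tmul big1 // => p _; rewrite big1 // => p' _.
  by rewrite (tb_overflow _ _ le_nl) !(mulr0, mul0r).
rewrite (tb_tbas i lt_jn) (tb_tbas k lt_ln) tmul_tbas.
by rewrite bidx1 ?ltn_pmod // bidx2 // bidx1 ?ltn_pmod // bidx2 // /tb modnDm.
Qed.

Lemma tt_mul_pure (u v u' v' : taft) (r s : tidx) :
  tt_mul q (tt_pure u v) (tt_pure u' v') r s = tmul q u u' r * tmul q v v' s.
Proof.
rewrite (tmulE u) (tmulE v) /tt_mul /tt_pure big_distrl; apply: eq_bigr => p1 _.
rewrite big_distrl exchange_big; apply: eq_bigr => p3 _.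
rewrite big_distrr; apply: eq_bigr => p2 _.
by rewrite big_distrr; apply: eq_bigr => p4 _ /=; ring.
Qed.

Lemma tt_mulDl (u v w : taft2) :
  tt_mul q (tt_add u v) w = tt_add (tt_mul q u w) (tt_mul q v w).
Proof.
apply: functional_extensionality => r; apply: functional_extensionality => s.
rewrite /tt_mul /tt_add -big_split; apply: eq_bigr => p1 _.
rewrite -big_split; apply: eq_bigr => p2 _.
rewrite -big_split; apply: eq_bigr => p3 _.
by rewrite -big_split; apply: eq_bigr => p4 _ /=; ring.
Qed.

Lemma tt_mulDr (u v w : taft2) :
  tt_mul q w (tt_add u v) = tt_add (tt_mul q w u) (tt_mul q w v).
Proof.
apply: functional_extensionality => r; apply: functional_extensionality => s.
rewrite /tt_mul /tt_add -big_split; apply: eq_bigr => p1 _.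
rewrite -big_split; apply: eq_bigr => p2 _.
rewrite -big_split; apply: eq_bigr => p3 _.
by rewrite -big_split; apply: eq_bigr => p4 _ /=; ring.
Qed.

Lemma iter_tt_mulDr (m : nat) (w u v : taft2) :
  iter m (tt_mul q w) (tt_add u v) =
  tt_add (iter m (tt_mul q w) u) (iter m (tt_mul q w) v).
Proof. by elim: m => [|m IHm] //=; rewrite IHm tt_mulDr. Qed.

Lemma iter_Delta_g (m a b c d : nat) :
  iter m (tt_mul q (@Delta_g K n)) (tt_pure (tb n a b) (tb n c d)) =
  tt_pure (tb n (m + a) b) (tb n (m + c) d).
Proof.
elim: m => [|m IHm] //=; rewrite IHm.
apply: functional_extensionality => r; apply: functional_extensionality => s.
by rewrite /Delta_g tt_mul_pure !tmul_tb !mul0n expr0 !mul1r !add1n.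
Qed.

Lemma Delta_b_g (i : nat) : (i < n)%N ->
  Delta_b q (bidx i 0) = tt_pure (tb n i 0) (tb n i 0).
Proof. by move=> lt_in; rewrite /Delta_b bidx1 // bidx2 //= iter_Delta_g !addn0. Qed.

Lemma Delta_b_gx (i : nat) : (1 < n)%N -> (i < n)%N ->
  Delta_b q (bidx i 1) =
  tt_add (tt_pure (tb n i 1) (tb n i 0)) (tt_pure (tb n (i + 1) 0) (tb n i 1)).
Proof.
move=> n_gt1 lt_in; rewrite /Delta_b bidx1 // bidx2 //= /Delta_x tt_mulDl /tone.
have tt_mul_tone a b c d :
    tt_mul q (tt_pure (tb n a b) (tb n c d)) (tt_pure (tb n 0 0) (tb n 0 0)) =
    tt_pure (tb n a b) (tb n c d).
  apply: functional_extensionality => r; apply: functional_extensionality => s.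
  by rewrite tt_mul_pure !tmul_tb !mod0n !muln0 expr0 !mul1r !addn0.
by rewrite !tt_mul_tone iter_tt_mulDr !iter_Delta_g !addn0 addnC.
Qed.

Definition homog_xdeg (d : nat) (u : taft2) :=
  forall r s : tidx, ((r.2 : nat) + s.2 != d)%N -> u r s = 0.

Lemma tmul_tbas_xdeg (p1 p3 r : tidx) : ((r.2 : nat) != p1.2 + p3.2)%N ->
  tmul q (tbas K p1) (tbas K p3) r = 0.
Proof. by move=> r2_neq; rewrite tmul_tbas /tb (negbTE r2_neq) andbF mulr0. Qed.

Lemma homog_xdeg_mul (a b : nat) (u v : taft2) :
  homog_xdeg a u -> homog_xdeg b v -> homog_xdeg (a + b) (tt_mul q u v).
Proof.
move=> hu hv r s rs_neq; rewrite /tt_mul big1 // => p1 _; rewrite big1 // => p2 _.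
rewrite big1 // => p3 _; rewrite big1 // => p4 _.
have [e1|/hu->] := eqVneq (p1.2 + p2.2)%N a; last by rewrite !mul0r.
have [e2|/hv->] := eqVneq (p3.2 + p4.2)%N b; last by rewrite !(mul0r, mulr0).
have [e3|/tmul_tbas_xdeg->] := eqVneq (r.2 : nat) (p1.2 + p3.2)%N; last by rewrite !(mul0r, mulr0).
have [e4|/tmul_tbas_xdeg->] := eqVneq (s.2 : nat) (p2.2 + p4.2)%N; last by rewrite mulr0.
by move/eqP: rs_neq; lia.
Qed.

Lemma homog_xdeg_pure (a b c d : nat) : homog_xdeg (b + d) (tt_pure (tb n a b) (tb n c d)).
Proof.
move=> r s rs_neq; rewrite /tt_pure /tb.
have [r2|r2] := eqVneq (r.2 : nat) b; last by rewrite andbF mul0r.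
have [s2|s2] := eqVneq (s.2 : nat) d; last by rewrite andbF mulr0.
by rewrite r2 s2 eqxx in rs_neq.
Qed.

Lemma homog_xdeg_add (d : nat) (u v : taft2) :
  homog_xdeg d u -> homog_xdeg d v -> homog_xdeg d (tt_add u v).
Proof. by move=> hu hv r s rs_neq; rewrite /tt_add hu ?hv ?addr0. Qed.

Lemma homog_xdeg_Delta_b (p : tidx) : homog_xdeg p.2 (Delta_b q p).
Proof.
rewrite /Delta_b; elim: (p.1 : nat) => [|m IHm] /=; last first.
  by rewrite -(add0n p.2); apply: homog_xdeg_mul => //; exact: (@homog_xdeg_pure 1 0 1 0).
elim: (p.2 : nat) => [|j IHj] /=; first exact: (@homog_xdeg_pure 0 0 0 0).
rewrite -add1n; apply: homog_xdeg_mul => //.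
by apply: homog_xdeg_add; [exact: (@homog_xdeg_pure 0 1 0 0) | exact: (@homog_xdeg_pure 1 0 0 1)].
Qed.

Definition kCn_part (h : taft) : taft := fun p => if (p.2 : nat) == 0%N then h p else 0.

Lemma kCn_part_in (h : taft) : in_kCn (kCn_part h).
Proof. by move=> p p2; rewrite /kCn_part (negbTE p2). Qed.

Lemma kCn_part_id (h : taft) : kCn_part (kCn_part h) = kCn_part h.
Proof. by apply: functional_extensionality => p; rewrite /kCn_part; case: eqP. Qed.

Lemma kCn_part_tbas (s p : tidx) : (s.2 : nat) != 0%N -> kCn_part (tbas K s) p = 0.
Proof.
move=> s2; rewrite /kCn_part tbasE; case: eqP => // p2.
by case: eqP => // ps; rewrite -ps p2 eqxx in s2.
Qed.

Lemma Delta_kCn_part (h : taft) (r s : tidx) : (r.2 : nat) = 0%N -> (s.2 : nat) = 0%N ->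
  Delta q h r s = Delta q (kCn_part h) r s.
Proof.
move=> r2 s2; apply: eq_bigr => p _; rewrite /kCn_part; case: eqP => // /eqP p2.
by rewrite homog_xdeg_Delta_b ?mulr0 // r2 s2 eq_sym.
Qed.

Lemma tmul_kCn_part (u v : taft) (r : tidx) : (r.2 : nat) = 0%N ->
  tmul q u v r = tmul q (kCn_part u) (kCn_part v) r.
Proof.
move=> r2; apply: eq_bigr => p _; apply: eq_bigr => p' _.
rewrite /kCn_part; case: eqP => p2; case: eqP => p'2 //;
  rewrite /tb r2 (eq_sym 0%N) addn_eq0;
  try (move/eqP/negbTE: p2 => ->); try (move/eqP/negbTE: p'2 => ->);
  by rewrite /= ?andbF !mulr0.
Qed.

Section Action.
Variables (A : algType K) (af : tidx -> A -> A).

Definition actgx (i j : nat) (a : A) : A := hact af (tb n i j) a.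

Lemma actgxE (i j : nat) (a : A) :
  actgx i j a = if (j < n)%N then af (bidx (i %% n) j) a else 0.
Proof. exact: sum_tbZ. Qed.

Lemma af_bidx (i j : nat) (a : A) : (j < n)%N -> af (bidx (i %% n) j) a = actgx i j a.
Proof. by move=> lt_jn; rewrite actgxE lt_jn. Qed.

Lemma af_actgx (p : tidx) (a : A) : af p a = actgx p.1 p.2 a.
Proof. by rewrite actgxE ltn_ord modn_small // bidx_val. Qed.

Lemma actgx_mod (i j : nat) (a : A) : actgx (i %% n) j a = actgx i j a.
Proof. by rewrite !actgxE modn_mod. Qed.

Lemma actgx_modDl (i l j : nat) (a : A) : actgx (i %% n + l) j a = actgx (i + l) j a.
Proof. by rewrite !actgxE modnDml. Qed.

Lemma sum_Delta_tb (i j : nat) (F : tidx -> tidx -> A) : (j < n)%N ->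
  \sum_r \sum_s Delta q (tb n i j) r s *: F r s =
  \sum_r \sum_s Delta_b q (bidx (i %% n) j) r s *: F r s.
Proof.
by move=> lt_jn; apply: eq_bigr => r _; apply: eq_bigr => s _; rewrite /Delta sum_tbM lt_jn.
Qed.

Lemma sum_tt_pure (a b c d : nat) (F : tidx -> tidx -> A) : (b < n)%N -> (d < n)%N ->
  \sum_r \sum_s tt_pure (tb n a b) (tb n c d) r s *: F r s
  = F (bidx (a %% n) b) (bidx (c %% n) d).
Proof.
move=> lt_bn lt_dn; rewrite /tt_pure.
under eq_bigr do under eq_bigr do rewrite -scalerA.
by under eq_bigr do rewrite -scaler_sumr sum_tbZ lt_dn; rewrite sum_tbZ lt_bn.
Qed.

Lemma sum_tt_add (u v : taft2) (F : tidx -> tidx -> A) :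
  \sum_r \sum_s tt_add u v r s *: F r s
  = \sum_r \sum_s u r s *: F r s + \sum_r \sum_s v r s *: F r s.
Proof.
rewrite -big_split; apply: eq_bigr => r _; rewrite -big_split; apply: eq_bigr => s _.
by rewrite /tt_add scalerDl.
Qed.

Lemma hact_tmul_tbas (c d l m : nat) (a : A) : (c < n)%N -> (d < n)%N ->
  hact af (tmul q (tbas K (bidx c d)) (tb n l m)) a =
  q ^+ (d * (l %% n)) *: actgx (c + l) (d + m) a.
Proof.
move=> lt_cn lt_dn; have -> : tbas K (bidx c d) = tb n c d by rewrite tb_tbas // modn_small.
rewrite /actgx /hact scaler_sumr; apply: eq_bigr => p _.
by rewrite tmul_tb scalerA.
Qed.

Lemma hact_eq_kCn (h h' : taft) (a : A) :
  (forall (p : tidx) (b : A), (p.2 : nat) != 0%N -> af p b = 0) ->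
  (forall p : tidx, (p.2 : nat) = 0%N -> h p = h' p) -> hact af h a = hact af h' a.
Proof.
move=> x_act0 hh'; apply: eq_bigr => p _.
by have [/hh'->|/x_act0->] := eqVneq (p.2 : nat) 0%N; rewrite ?scaler0.
Qed.

Lemma partial_action_of_kCn :
  is_partial_action_kCn q af ->
  (forall (p : tidx) (a : A), (p.2 : nat) != 0%N -> af p a = 0) ->
  is_partial_action q af.
Proof.
move=> [act1 act_mul act_comp] x_act0.
have hact_kCn (h : taft) (a : A) : hact af h a = hact af (kCn_part h) a.
  by apply: hact_eq_kCn => // p p2; rewrite /kCn_part p2.
have hact_tmul_x (s : tidx) (h : taft) (a : A) :
    (s.2 : nat) != 0%N -> hact af (tmul q (tbas K s) h) a = 0.
  move=> s2; rewrite /hact big1 // => p _.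
  have [p2|/x_act0->] := eqVneq (p.2 : nat) 0%N; last by rewrite scaler0.
  rewrite tmul_kCn_part // /tmul big1 ?scale0r // => p1 _.
  by rewrite big1 // => p3 _; rewrite kCn_part_tbas // !mul0r.
split => // [h _ a b | h k _ _ a].
- rewrite hact_kCn act_mul; last exact: kCn_part_in.
  apply: eq_bigr => r _; apply: eq_bigr => s _.
  have [r2|r2] := eqVneq (r.2 : nat) 0%N; last by rewrite x_act0 // !mul0r !scaler0.
  have [s2|s2] := eqVneq (s.2 : nat) 0%N; last by rewrite (x_act0 s) // !mulr0 !scaler0.
  by rewrite -Delta_kCn_part.
- rewrite (hact_kCn k) hact_kCn act_comp; [|exact: kCn_part_in..].
  apply: eq_bigr => r _; apply: eq_bigr => s _.
  have [r2|r2] := eqVneq (r.2 : nat) 0%N; last by rewrite x_act0 // !mul0r !scaler0.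
  have [s2|s2] := eqVneq (s.2 : nat) 0%N; last by rewrite !hact_tmul_x // !mulr0 !scaler0.
  rewrite -Delta_kCn_part //; congr (_ *: (_ * _)).
  apply: hact_eq_kCn => // p p2.
  by rewrite tmul_kCn_part // [RHS]tmul_kCn_part // kCn_part_id.
Qed.

Section PartialAction.
Hypotheses (PA : is_partial_action q af) (n_gt1 : (1 < n)%N).

Lemma partial_action_restrict (P : taft -> Prop) : is_partial_action_on q P af.
Proof.
case: PA => act1 act_mul act_comp.
by split => // [h _ | h k _ _]; [apply: act_mul | apply: act_comp].
Qed.

Lemma actgx00 (a : A) : actgx 0 0 a = a.
Proof. by case: PA => act1 _ _; apply: act1. Qed.

Lemma actgx_g_act (i l m : nat) (a : A) :
  actgx i 0 (actgx l m a) = actgx i 0 1 * actgx (i + l) m a.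
Proof.
case: PA => _ _ act_comp; rewrite /actgx act_comp // sum_Delta_tb // Delta_b_g ?ltn_pmod //.
rewrite sum_tt_pure // hact_tmul_tbas ?ltn_pmod // mul0n expr0 scale1r add0n.
by rewrite modn_mod af_bidx // actgx_modDl.
Qed.

Lemma actgx_gx_act (i l m : nat) (a : A) :
  actgx i 1 (actgx l m a) =
  actgx i 1 1 * actgx (i + l) m a + actgx (i + 1) 0 1 * (q ^+ (l %% n) *: actgx (i + l) m.+1 a).
Proof.
case: PA => _ _ act_comp; rewrite /actgx act_comp // sum_Delta_tb // Delta_b_gx ?ltn_pmod //.
rewrite sum_tt_add !sum_tt_pure // !hact_tmul_tbas ?ltn_pmod // mul0n expr0 scale1r add0n.
by rewrite mul1n add1n !modn_mod !af_bidx // !actgx_modDl.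
Qed.

Lemma global_action_of_g1 :
  (forall (p : tidx), af p 0 = 0) -> actgx 1 0 1 = 1 -> is_global_action q af.
Proof.
move=> act0 g1; split => // h.
have actgx0 i j : actgx i j 0 = 0 by rewrite actgxE act0; case: ifP.
have gi1 i : actgx i 0 1 = 1.
  elim: i => [|i IHi]; first exact: actgx00.
  by have := actgx_g_act 1 i 0 1; rewrite IHi g1 mul1r add1n => <-.
have x1 : actgx 0 1 1 = 0.
  have := actgx_gx_act 0 0 0 1; rewrite actgx00 mulr1 add0n g1 mod0n expr0 scale1r mul1r.
  by move/(congr1 (fun y => y - actgx 0 1 1)); rewrite subrr addrK.
have xj1 j : actgx 0 j.+1 1 = 0.
  elim: j => [|j IHj]; first exact: x1.
  have := actgx_gx_act 0 0 j.+1 1.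
  by rewrite IHj actgx0 x1 mul0r add0r add0n g1 mod0n expr0 scale1r mul1r.
have af1 p : af p 1 = ((p.2 : nat) == 0%N)%:R *: 1.
  case: p => i [[|j] lt_jn]; rewrite af_actgx /=; first by rewrite gi1 scale1r.
  by rewrite scale0r; have := actgx_g_act i 0 j.+1 1; rewrite xj1 actgx0 gi1 mul1r addn0.
by rewrite /hact /teps scaler_suml; apply: eq_bigr => p _; rewrite af1 scalerA.
Qed.

Lemma partial_action_x_act0 (k : nat) : (0 < k < n)%N -> n.-primitive_root q ->
  (forall a, actgx k 0 a = a) -> forall (i j : nat) (a : A), actgx i j.+1 a = 0.
Proof.
move=> /andP[k_gt0 lt_kn] q_prim gk.
have gk_periodic l m a : actgx (k + l) m a = actgx l m a.
  by have := actgx_g_act k l m a; rewrite !gk mul1r.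
have gn1 : actgx (n' + 1) 0 1 = 1 by rewrite addn1 -actgx_mod modnn actgx00.
have xlast_g a : actgx n' 1 1 * actgx n' 0 a = 0.
  have := actgx_gx_act n' 0 0 a; rewrite actgx00 !addn0 gn1 mod0n expr0 scale1r mul1r.
  by move/(congr1 (fun y => y - actgx n' 1 a)); rewrite subrr addrK.
have xlast a : actgx n' 1 a = 0.
  have := actgx_gx_act n' k 0 a.
  rewrite gk addnC !gk_periodic xlast_g add0r gn1 mul1r modn_small // => /eqP.
  rewrite -subr_eq0 -{1}[actgx n' 1 a]scale1r -scalerBl scaler_eq0 subr_eq0 => /orP[|/eqP //].
  by rewrite eq_sym -[1](expr0 q) (eq_prim_root_expr q_prim) mod0n modn_small // eqn0Ngt k_gt0.
move=> i j a; have := actgx_gx_act n' i.+1 j a.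
rewrite !xlast mul0r add0r gn1 mul1r => /esym/eqP.
rewrite scaler_eq0 expf_eq0 (prim_root_eq0 q_prim) andbF /=.
by rewrite addnS -addSn -actgx_mod modnDl actgx_mod => /eqP.
Qed.

End PartialAction.
End Action.
End TaftBasis.

Theorem corollary3p13 (K : fieldType) (n : nat) (q : K) (A : algType K)
    (act : 'I_n * 'I_n -> {linear A -> A}) :
  (2 <= n)%N ->
  n.-primitive_root q ->
  (hact (fun p => act p) (tb n 1 0) 1 = 0 \/ hact (fun p => act p) (tb n 1 0) 1 = 1) ->
  (exists k : nat, (2 <= k < n)%N /\
     forall a : A, hact (fun p => act p) (tb n k 0) a = a) ->
  (is_partial_action q (fun p => act p) <->
   (is_global_action q (fun p => act p) \/
    [/\ is_partial_action_kCn q (fun p => act p),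
        hact (fun p => act p) (tb n 1 0) 1 = 0
      & forall (i j : nat) (a : A), (i < n)%N -> (j < n)%N ->
          hact (fun p => act p) (tb n i j) a
          = (j == 0%N)%:R *: hact (fun p => act p) (tb n i 0) a])).
Proof.
case: n act => [//|n'] act n_gt1 q_prim g1 [k [/andP[k_gt1 lt_kn] gk]].
have k_range : (0 < k < n'.+1)%N by rewrite lt_kn (ltnW k_gt1).
split => [PA | [[PA _] | [act_kCn _ x_act]]] //.
- case: g1 => g1; last by left; apply: global_action_of_g1 => // p; rewrite linear0.
  right; split => //; first exact: partial_action_restrict.
  move=> i [|j] a _ _; first by rewrite scale1r.
  by rewrite scale0r; apply: (partial_action_x_act0 PA n_gt1 k_range q_prim gk).
- apply: partial_action_of_kCn => // p a p2.
  have := af_actgx (fun p => act p) p a; rewrite /= => ->.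
  by rewrite /actgx x_act ?ltn_ord // (negbTE p2) scale0r.
Qed.
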